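(* Let $a,b\in\mathcal{R}$ with $\mathrm{ord}(a)=i$, $\mathrm{ord}(b)=j$ and $i\ge j\ge0$, let $d\in\mathcal{M}$ be a common divisor of $\mathrm{top}(a)$ and $\mathrm{top}(b)$ in $\mathcal{M}$, and let $a',b'\in\mathcal{M}$ satisfy $\mathrm{top}(a)=a'd$ and $\mathrm{top}(b)=b'd$. Then: (1) $\mathrm{top}(b)^{i-j}b'a=cb+c'$ for some $c\in\mathcal{R}$ with $\mathrm{ord}(c)=i-j$ and some $c'\in\mathcal{R}$ with $\mathrm{ord}(c')<j$; (2) $a\,\mathrm{top}(b)^{i-j}b'=bc+c'$ for some $c\in\mathcal{R}$ with $\mathrm{ord}(c)=i-j$ and some $c'\in\mathcal{R}$ with $\mathrm{ord}(c')<j$.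
   Context: Let $\mathrm{Hol}$ be the space of holomorphic functions on the upper half plane, $q=e^{2\pi iz}$, $f'=\frac{1}{2\pi i}\frac{df}{dz}$, and $E_2,E_4,E_6$ the Eisenstein series with constant term $1$. For $k\in\mathbb{R}$ let $D_kf=f'-\frac{k}{12}E_2f$. Let $H=\bigoplus_{n\in\mathbb{R}}H_n$ where each $H_n$ is a copy of $\mathrm{Hol}$, elements written $(f,n)$, with product $(f,n)(g,m)=(fg,n+m)$. $\mathrm{End}^i(H)$ denotes the $\mathbb{C}$-linear maps sending each $H_n$ into $H_{n+i}$ and $\mathrm{End}(H)=\bigoplus_i\mathrm{End}^i(H)$. Define $\delta(f,n)=(D_nf,n+2)$, $e_4(f,n)=(E_4f,n+4)$, $e_6(f,n)=(E_6f,n+6)$; $\mathcal{R}$ is the $\mathbb{C}$-subalgebra of $\mathrm{End}(H)$ generated by $\delta,e_4,e_6$. The ring $\mathcal{M}=\mathbb{C}[E_4,E_6]$ of level-one holomorphic modular forms is identified with the subalgebra of $\mathcal{R}$ generated by $e_4,e_6$ via $E_4\mapsto e_4$, $E_6\mapsto e_6$ (a modular form $g$ of weight $w$ acts by $(f,n)\mapsto(gf,n+w)$). Every nonzero $a\in\mathcal{R}$ has a unique expression $a=a_n\delta^n+\cdots+a_1\delta+a_0$ with $a_i\in\mathcal{M}$ and $a_n\neq0$; then $\mathrm{top}(a)=a_n$ and $\mathrm{ord}(a)=n$. For $a=0$, $\mathrm{top}(a)=0$ and $\mathrm{ord}(a)=-\infty$. *)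

From HB Require Import structures.
From mathcomp Require Import all_boot all_order all_algebra.
From mathcomp Require Import complex.
From mathcomp Require Import mpoly.
Set Implicit Arguments. Unset Strict Implicit. Unset Printing Implicit Defensive.
Import Order.TTheory GRing.Theory Num.Theory.
Local Open Scope ring_scope.

Section DiffOps.
Variable R : rcfType.
Definition Cx := complex R.

(* M = C[E4, E6]; E4, E6 are algebraically independent, so M is the
   polynomial ring in two variables: 'X_0 <-> E4, 'X_1 <-> E6. *)
Definition Mf := {mpoly Cx[2]}.
Definition iE4 : 'I_2 := ord0.
Definition iE6 : 'I_2 := ord_max.
Definition E4 : Mf := 'X_iE4.
Definition E6 : Mf := 'X_iE6.

(* The Serre derivative on M (weight-k piece: f |-> f' - k/12 E2 f); it is
   the derivation determined by  theta E4 = - E6 / 3,  theta E6 = - E4^2 / 2. *)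
Definition theta (p : Mf) : Mf :=
  - ((3%:R : Cx)^-1 *: (E6 * mderiv iE4 p))
  - ((2%:R : Cx)^-1 *: (E4 ^+ 2 * mderiv iE6 p)).

(* Elements of the operator algebra R are represented by their unique normal
   form  a_n delta^n + ... + a_1 delta + a_0  (a_k in M): the polynomial
   sum_k a_k 'X^k in {poly M}. *)
Definition Rop := {poly Mf}.

Definition ofM (g : Mf) : Rop := g%:P.

(* left multiplication by delta, using  delta o g = g o delta + theta(g) *)
Definition dleft (B : Rop) : Rop := 'X * B + map_poly theta B.

Definition rmul (A B : Rop) : Rop :=
  \sum_(n < size A) (A`_n)%:P * iter n dleft B.

(* ord : None stands for -infinity (a = 0) *)
Definition ord (a : Rop) : option nat :=
  if a == 0 then None else Some (size a).-1.
Definition top (a : Rop) : Mf := lead_coef a.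

Definition ord_lt (o : option nat) (j : nat) : bool :=
  if o is Some n then (n < j)%N else true.

End DiffOps.

From HB Require Import structures.
From mathcomp Require Import all_boot all_order all_algebra.
From mathcomp Require Import complex.
From mathcomp Require Import mpoly.
From mathcomp Require Import ring zify.
Set Implicit Arguments. Unset Strict Implicit. Unset Printing Implicit Defensive.
Import GRing.Theory.
Local Open Scope ring_scope.

(* R is the skew polynomial ring M[delta; theta]: delta * g = g * delta + theta g.
   Its product is linear on the left and associative, and, exactly as for
   commutative polynomials, the coefficient of delta^(N + M) in a product of
   operators of orders N and M is the product of their top coefficients.
   Since top(a) b' = a' b' d = a' top(b), the operator b' a - a' delta^(i-j) b has
   order < i; pseudo-division by b, which costs one factor top(b) per degree,
   removes the remaining i - j degrees.  The right-handed statement is the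
   mirror image, with associativity used to move constants across. *)

Lemma size_poly_leq_coef0 (K : nzRingType) (p : {poly K}) n :
  (size p <= n.+1)%N -> p`_n = 0 -> (size p <= n)%N.
Proof.
move=> /leq_sizeP p_small pn0; apply/leq_sizeP => k.
by rewrite leq_eqVlt => /predU1P [<- // | /p_small].
Qed.

Lemma size_scale_Xn_leq (K : nzRingType) (g : K) m : (size (g *: 'X^m) <= m.+1)%N.
Proof. by rewrite (leq_trans (size_scale_leq _ _)) ?size_polyXn. Qed.

Section SkewPolynomials.

Variables (K : comNzRingType) (der : {additive K -> K}).
Hypothesis derM : forall x y, der (x * y) = der x * y + x * der y.
Implicit Types (A B C a b p q r : {poly K}) (g : K).

Definition skew_Xmul B : {poly K} := 'X * B + map_poly der B.

Definition skew_mul (A B : {poly K}) : {poly K} :=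
  \sum_(n < size A) (A`_n)%:P * iter n skew_Xmul B.

Lemma der1 : der 1 = 0.
Proof.
by move: (derM 1 1); rewrite !(mul1r, mulr1) => /esym/eqP; rewrite -subr_eq0 addrK => /eqP.
Qed.

Fact skew_Xmul_is_zmod_morphism : zmod_morphism skew_Xmul.
Proof. by move=> B C; rewrite /skew_Xmul !raddfB /= mulrBr addrACA opprD. Qed.
HB.instance Definition _ :=
  GRing.isZmodMorphism.Build {poly K} {poly K} skew_Xmul skew_Xmul_is_zmod_morphism.

Lemma skew_XmulZ g B : skew_Xmul (g *: B) = g *: skew_Xmul B + der g *: B.
Proof.
have map_derZ : map_poly der (g *: B) = g *: map_poly der B + der g *: B.
  by apply/polyP => n; rewrite !(coefD, coefZ, coef_map) derM addrC mulrC.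
by rewrite /skew_Xmul map_derZ -scalerAr scalerDr addrA.
Qed.

Lemma skew_Xmul_Xn n : skew_Xmul 'X^n = 'X^(n.+1).
Proof.
rewrite /skew_Xmul -exprS.
suff -> : map_poly der 'X^n = 0 by rewrite addr0.
by apply/polyP => k; rewrite coef_map coefXn coef0; case: (k == n); rewrite ?der1 ?raddf0.
Qed.

Lemma size_skew_Xmul B : (size (skew_Xmul B) <= (size B).+1)%N.
Proof.
apply/leq_sizeP => k lt_Bk; rewrite coefD coefXM coef_map.
case: k lt_Bk => // k lt_Bk /=.
by rewrite !nth_default ?raddf0 ?addr0 // ltnW.
Qed.

Lemma coef_skew_Xmul_top B n : (size B <= n.+1)%N -> (skew_Xmul B)`_n.+1 = B`_n.
Proof.
by move=> szB; rewrite coefD coefXM coef_map /= (nth_default _ szB) raddf0 addr0.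
Qed.

Lemma size_iter_skew_Xmul n B : (size (iter n skew_Xmul B) <= size B + n)%N.
Proof.
elim: n => [|n IHn] /=; first by rewrite addn0.
by rewrite addnS (leq_trans (size_skew_Xmul _)).
Qed.

Lemma coef_iter_skew_Xmul_top n m B :
  (size B <= m.+1)%N -> (iter n skew_Xmul B)`_(m + n) = B`_m.
Proof.
move=> szB; elim: n => [|n IHn] /=; first by rewrite addn0.
by rewrite addnS coef_skew_Xmul_top // -addSn (leq_trans (size_iter_skew_Xmul _ _)) ?leq_add2r.
Qed.

Lemma skew_mulE A B k : (size A <= k)%N ->
  skew_mul A B = \sum_(n < k) A`_n *: iter n skew_Xmul B.
Proof.
move=> szA; rewrite /skew_mul; under eq_bigr do rewrite mul_polyC.
rewrite (big_ord_widen k (fun n => A`_n *: iter n skew_Xmul B) szA) big_mkcond.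
by apply: eq_bigr => n _; case: ltnP => // /(nth_default 0) ->; rewrite scale0r.
Qed.

Definition skew_mulr B A := skew_mul A B.

Fact skew_mulr_is_semilinear B : semilinear (skew_mulr B).
Proof.
split=> [g A | A C]; rewrite /skew_mulr.
  rewrite (skew_mulE _ (size_scale_leq g A)) (skew_mulE _ (leqnn _)) scaler_sumr.
  by apply: eq_bigr => n _; rewrite coefZ scalerA.
have [szA szC] : (size A <= maxn (size A) (size C))%N /\ (size C <= maxn (size A) (size C))%N.
  by rewrite leq_maxl leq_maxr.
rewrite (skew_mulE _ szA) (skew_mulE _ szC) -big_split.
rewrite (skew_mulE _ (leq_trans (size_polyD A C) (leqnn _))).
by apply: eq_bigr => n _; rewrite coefD scalerDl.
Qed.
HB.instance Definition _ B := GRing.isSemilinear.Build K {poly K} {poly K} _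
  (skew_mulr B) (skew_mulr_is_semilinear B).

Lemma skew_mul0l B : skew_mul 0 B = 0.
Proof. exact: linear0 (skew_mulr B). Qed.

Lemma skew_mulDl A C B : skew_mul (A + C) B = skew_mul A B + skew_mul C B.
Proof. exact: linearD (skew_mulr B) A C. Qed.

Lemma skew_mulBl A C B : skew_mul (A - C) B = skew_mul A B - skew_mul C B.
Proof. exact: linearB (skew_mulr B) A C. Qed.

Lemma skew_mulZl g A B : skew_mul (g *: A) B = g *: skew_mul A B.
Proof. exact: linearZZ (skew_mulr B) g A. Qed.

Lemma skew_mul_suml I (r : seq I) (P : pred I) (F : I -> {poly K}) B :
  skew_mul (\sum_(i <- r | P i) F i) B = \sum_(i <- r | P i) skew_mul (F i) B.
Proof. exact: (linear_sum (skew_mulr B) r P F). Qed.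

Fact skew_mul_is_zmod_morphism A : zmod_morphism (skew_mul A).
Proof.
have iterB n : zmod_morphism (iter n skew_Xmul).
  by elim: n => [|n IHn] B C //=; rewrite IHn raddfB.
by move=> B C; rewrite /skew_mul -sumrB; apply: eq_bigr => n _; rewrite iterB mulrBr.
Qed.
HB.instance Definition _ A := GRing.isZmodMorphism.Build {poly K} {poly K}
  (skew_mul A) (skew_mul_is_zmod_morphism A).

Lemma skew_mul_Xn n B : skew_mul 'X^n B = iter n skew_Xmul B.
Proof.
rewrite (skew_mulE _ (leqnn _)) size_polyXn big_ord_recr /= coefXn eqxx scale1r.
by rewrite big1 ?add0r // => k _; rewrite coefXn ltn_eqF ?scale0r.
Qed.

Lemma skew_mul_polyC g B : skew_mul g%:P B = g *: B.
Proof. by rewrite (skew_mulE _ (size_polyC_leq1 g)) big_ord1 coefC. Qed.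

Lemma skew_mulr1 A : skew_mul A 1 = A.
Proof.
have iter_Xmul1 n : iter n skew_Xmul 1 = 'X^n.
  by elim: n => //= n ->; rewrite skew_Xmul_Xn.
rewrite (skew_mulE _ (leqnn _)) -[RHS]coefK poly_def.
by apply: eq_bigr => n _; rewrite iter_Xmul1.
Qed.

Lemma skew_mul_XmulA B C : skew_mul (skew_Xmul B) C = skew_Xmul (skew_mul B C).
Proof.
rewrite -[B in LHS]coefK poly_def raddf_sum skew_mul_suml.
rewrite (skew_mulE _ (leqnn _)) raddf_sum; apply: eq_bigr => n _.
by rewrite /= !skew_XmulZ skew_Xmul_Xn skew_mulDl !skew_mulZl !skew_mul_Xn.
Qed.

Lemma skew_mulA A B C : skew_mul A (skew_mul B C) = skew_mul (skew_mul A B) C.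
Proof.
have iter_Xmull n D : skew_mul (iter n skew_Xmul D) C = iter n skew_Xmul (skew_mul D C).
  by elim: n => //= n <-; rewrite skew_mul_XmulA.
rewrite !(skew_mulE _ (leqnn (size A))) skew_mul_suml.
by apply: eq_bigr => n _; rewrite skew_mulZl iter_Xmull.
Qed.

Lemma size_skew_mul_leq A B N M : (size A <= N.+1)%N -> (size B <= M.+1)%N ->
  (size (skew_mul A B) <= (N + M).+1)%N.
Proof.
move=> szA szB; rewrite (skew_mulE _ szA) (leq_trans (size_sum _ _ _)) //.
apply/bigmax_leqP => n _; rewrite (leq_trans (size_scale_leq _ _)) //.
by apply: leq_trans (size_iter_skew_Xmul _ _) _; have := ltn_ord n; lia.
Qed.

Lemma coef_skew_mul_top A B N M : (size A <= N.+1)%N -> (size B <= M.+1)%N ->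
  (skew_mul A B)`_(N + M) = A`_N * B`_M.
Proof.
move=> szA szB; rewrite (skew_mulE _ szA) big_ord_recr coefD coef_sum /=.
rewrite coefZ addnC coef_iter_skew_Xmul_top // big1 ?add0r // => n _.
rewrite coefZ [_`_(M + N)]nth_default ?mulr0 //.
by apply: leq_trans (size_iter_skew_Xmul _ _) _; have := ltn_ord n; lia.
Qed.

Lemma skew_pdivl b j m p : (size b <= j.+1)%N -> (size p <= j + m)%N ->
  exists2 q : {poly K}, (size q <= m)%N & (size (b`_j ^+ m *: p - skew_mul q b)%R <= j)%N.
Proof.
move=> szb; elim: m p => [|m IHm] p szp.
  by exists 0; rewrite ?size_poly0 // skew_mul0l subr0 scale1r -(addn0 j).
set c := p`_(j + m); set r := b`_j *: p - skew_mul (c *: 'X^m) b.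
have szr : (size r <= j + m)%N.
  apply: size_poly_leq_coef0.
    rewrite (leq_trans (size_polyD _ _)) // size_polyN geq_max.
    rewrite (leq_trans (size_scale_leq _ _)) -?addnS //=.
    by rewrite addnC size_skew_mul_leq ?size_scale_Xn_leq.
  rewrite coefB coefZ -/c addnC coef_skew_mul_top ?size_scale_Xn_leq //.
  by rewrite coefZ coefXn eqxx mulr1 mulrC subrr.
have [q szq szqr] := IHm r szr.
exists (q + (b`_j ^+ m * c) *: 'X^m).
  by rewrite (leq_trans (size_polyD _ _)) // geq_max size_scale_Xn_leq (leq_trans szq).
suff -> : b`_j ^+ m.+1 *: p - skew_mul (q + (b`_j ^+ m * c) *: 'X^m) b
          = b`_j ^+ m *: r - skew_mul q b by [].
rewrite skew_mulDl -scalerA skew_mulZl /r exprSr -scalerA scalerBr.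
by rewrite opprD addrA addrAC.
Qed.

Lemma skew_pdivr b j m p : (size b <= j.+1)%N -> (size p <= j + m)%N ->
  exists2 q : {poly K},
    (size q <= m)%N & (size (skew_mul p (b`_j ^+ m)%:P - skew_mul b q)%R <= j)%N.
Proof.
move=> szb; elim: m p => [|m IHm] p szp.
  by exists 0; rewrite ?size_poly0 // raddf0 subr0 expr0 skew_mulr1 -(addn0 j).
set t := b`_j; set c := p`_(j + m).
set r := skew_mul p t%:P - skew_mul b (c *: 'X^m).
have szr : (size r <= j + m)%N.
  have szp' : (size p <= (j + m).+1)%N by rewrite -addnS.
  apply: size_poly_leq_coef0.
    rewrite (leq_trans (size_polyD _ _)) // size_polyN geq_max -addnS.
    have := size_skew_mul_leq szp' (size_polyC_leq1 t); rewrite addn0 addnS => ->.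
    by rewrite size_skew_mul_leq ?size_scale_Xn_leq.
  have := coef_skew_mul_top szp' (size_polyC_leq1 t); rewrite addn0 => top_pt.
  rewrite coefB top_pt coef_skew_mul_top ?size_scale_Xn_leq //.
  by rewrite coefC coefZ coefXn eqxx mulr1 mulrC subrr.
have [q szq szqr] := IHm r szr.
exists (q + skew_mul (c *: 'X^m) (t ^+ m)%:P).
  rewrite (leq_trans (size_polyD _ _)) // geq_max (leq_trans szq) //=.
  by have := size_skew_mul_leq (size_scale_Xn_leq c m) (size_polyC_leq1 (t ^+ m)); rewrite addn0.
suff -> : skew_mul p (t ^+ m.+1)%:P - skew_mul b (q + skew_mul (c *: 'X^m) (t ^+ m)%:P)
          = skew_mul r (t ^+ m)%:P - skew_mul b q by [].
have -> : (t ^+ m.+1)%:P = skew_mul t%:P (t ^+ m)%:P by rewrite skew_mul_polyC scale_polyC -exprS.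
by rewrite raddfD /= !skew_mulA skew_mulBl opprD addrA addrAC.
Qed.

Lemma skew_pdivl_lead a b j m (a' b' : K) :
    (size a <= (j + m).+1)%N -> (size b <= j.+1)%N -> b' * a`_(j + m) = a' * b`_j ->
  exists q r, [/\ (b`_j ^+ m * b') *: a = skew_mul q b + r, (size q <= m.+1)%N,
                  q`_m = b`_j ^+ m * a' & (size r <= j)%N].
Proof.
move=> sza szb rel; set p := b' *: a - skew_mul (a' *: 'X^m) b.
have szp : (size p <= j + m)%N.
  apply: size_poly_leq_coef0.
    rewrite (leq_trans (size_polyD _ _)) // size_polyN geq_max.
    rewrite (leq_trans (size_scale_leq _ _)) //=.
    by rewrite addnC size_skew_mul_leq ?size_scale_Xn_leq.
  rewrite coefB coefZ rel addnC coef_skew_mul_top ?size_scale_Xn_leq //.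
  by rewrite coefZ coefXn eqxx mulr1 subrr.
have [q0 szq0 szr] := skew_pdivl szb szp.
exists ((b`_j ^+ m * a') *: 'X^m + q0), (b`_j ^+ m *: p - skew_mul q0 b); split => //.
- by rewrite /p skew_mulDl !skew_mulZl -!mul_polyC !polyCM; ring.
- by rewrite (leq_trans (size_polyD _ _)) // geq_max size_scale_Xn_leq (leq_trans szq0).
- by rewrite coefD coefZ coefXn eqxx mulr1 (nth_default 0 szq0) addr0.
Qed.

Lemma skew_pdivr_lead a b j m (a' b' : K) :
    (size a <= (j + m).+1)%N -> (size b <= j.+1)%N -> b' * a`_(j + m) = a' * b`_j ->
  exists q r, [/\ skew_mul a (b`_j ^+ m * b')%:P = skew_mul b q + r, (size q <= m.+1)%N,
                  q`_m = b`_j ^+ m * a' & (size r <= j)%N].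
Proof.
move=> sza szb rel; set t := b`_j; set p := skew_mul a b'%:P - skew_mul b (a' *: 'X^m).
have szp : (size p <= j + m)%N.
  apply: size_poly_leq_coef0.
    rewrite (leq_trans (size_polyD _ _)) // size_polyN geq_max.
    have := size_skew_mul_leq sza (size_polyC_leq1 b'); rewrite addn0 => ->.
    by rewrite size_skew_mul_leq ?size_scale_Xn_leq.
  have := coef_skew_mul_top sza (size_polyC_leq1 b'); rewrite addn0 => top_ab.
  rewrite coefB top_ab coef_skew_mul_top ?size_scale_Xn_leq //.
  by rewrite coefC coefZ coefXn eqxx mulr1 mulrC rel mulrC subrr.
have [q0 szq0 szr] := skew_pdivr szb szp.
exists (skew_mul (a' *: 'X^m) (t ^+ m)%:P + q0), (skew_mul p (t ^+ m)%:P - skew_mul b q0).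
have szX := size_scale_Xn_leq a' m; have szT := size_polyC_leq1 (t ^+ m).
split => //.
- have -> : (t ^+ m * b')%:P = skew_mul b'%:P (t ^+ m)%:P.
    by rewrite skew_mul_polyC scale_polyC mulrC.
  rewrite skew_mulA -[skew_mul a b'%:P](subrK (skew_mul b (a' *: 'X^m))) -/p.
  by rewrite skew_mulDl raddfD /= skew_mulA; ring.
- rewrite (leq_trans (size_polyD _ _)) // geq_max (leq_trans szq0) // andbT.
  by have := size_skew_mul_leq szX szT; rewrite addn0.
- rewrite coefD; have := coef_skew_mul_top szX szT; rewrite addn0 => ->.
  by rewrite coefZ coefXn eqxx mulr1 coefC (nth_default 0 szq0) addr0 mulrC.
Qed.

End SkewPolynomials.

Section ModularDerivation.

Variable R : rcfType.
Implicit Types (p q : Mf R) (c : Rop R).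

Lemma thetaE p : theta p =
  - ((3%:R : Cx R)^-1%:MP * (E6 R * mderiv iE4 p))
  - ((2%:R : Cx R)^-1%:MP * (E4 R ^+ 2 * mderiv iE6 p)).
Proof. by rewrite /theta !mul_mpolyC. Qed.

Fact theta_is_zmod_morphism : zmod_morphism (@theta R).
Proof. by move=> p q; rewrite !thetaE !mderivB; ring. Qed.
HB.instance Definition _ := GRing.isZmodMorphism.Build (Mf R) (Mf R) (@theta R)
  theta_is_zmod_morphism.

Lemma thetaM p q : theta (p * q) = theta p * q + p * theta q.
Proof. by rewrite !thetaE !mderivM; ring. Qed.

Lemma rmulE : @rmul R = skew_mul (@theta R).
Proof. by []. Qed.

Lemma ord_size c i : ord c = Some i -> size c = i.+1.
Proof.
by rewrite /ord; case: eqP => // /eqP c0 [<-]; rewrite prednK // size_poly_gt0.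
Qed.

Lemma ord_coef_top c k : (size c <= k.+1)%N -> c`_k != 0 -> ord c = Some k.
Proof.
move=> szc ck; have szcE : size c = k.+1.
  apply/anti_leq; rewrite szc /= ltnNge.
  by apply: contra ck => /(nth_default 0) ->.
by rewrite /ord -size_poly_eq0 szcE.
Qed.

Lemma ord_lt_size c j : (size c <= j)%N -> ord_lt (ord c) j.
Proof.
by rewrite /ord; case: eqP => //= /eqP c0; apply: leq_trans; rewrite prednK ?size_poly_gt0.
Qed.

End ModularDerivation.

Theorem theorem3p9 (R : rcfType) (a b : Rop R) (i j : nat) (d a' b' : Mf R) :
  ord a = Some i -> ord b = Some j -> (j <= i)%N ->
  top a = a' * d -> top b = b' * d ->
  (exists c c' : Rop R,
      rmul (ofM (top b ^+ (i - j) * b')) a = rmul c b + c'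
      /\ ord c = Some (i - j)%N /\ ord_lt (ord c') j)
  /\
  (exists c c' : Rop R,
      rmul a (ofM (top b ^+ (i - j) * b')) = rmul b c + c'
      /\ ord c = Some (i - j)%N /\ ord_lt (ord c') j).
Proof.
move=> /ord_size sza /ord_size szb le_ji topa topb.
set k := (i - j)%N; have ijk : i = (j + k)%N by rewrite subnKC.
have topbE : top b = b`_j by rewrite /top lead_coefE szb.
have topaE : top a = a`_i by rewrite /top lead_coefE sza.
have rel : b' * a`_(j + k) = a' * b`_j by rewrite -ijk -topaE -topbE topa topb mulrCA.
have sza' : (size a <= (j + k).+1)%N by rewrite -ijk sza.
have szb' : (size b <= j.+1)%N by rewrite szb.
have a'0 : a' != 0.
  by apply: contra_eq_neq topa => ->; rewrite mul0r /top lead_coef_eq0 -size_poly_eq0 sza.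
have bj0 : b`_j != 0 by rewrite -topbE /top lead_coef_eq0 -size_poly_eq0 szb.
have lead_quot0 : b`_j ^+ k * a' != 0 by rewrite mulf_neq0 ?expf_neq0.
have [c [c' [Ec szc ck szc']]] := skew_pdivl_lead (@theta R : {additive _ -> _}) sza' szb' rel.
have [e [e' [Ee sze ek sze']]] := skew_pdivr_lead (@thetaM R) sza' szb' rel.
rewrite topbE /ofM !rmulE skew_mul_polyC.
split; [exists c, c' | exists e, e']; rewrite ?Ec ?Ee; split=> //.
  by split; [apply: ord_coef_top; rewrite ?ck | exact: ord_lt_size].
by split; [apply: ord_coef_top; rewrite ?ek | exact: ord_lt_size].
Qed.
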